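(* Let $S$ be a finite semigroup. If $S$ is pseudo-nilpotent and the lower non-nilpotent graph $\mathcal{L}_S$ has no edges, then the upper non-nilpotent graph $\mathcal{N}_S$ has no edges.
   Context: For a semigroup $S$, $S^1$ denotes $S$ with an identity adjoined (if $S$ has none). For $x,y\in S$ and $z_1,z_2,\ldots\in S^1$ define recursively $\lambda_0=x$, $\rho_0=y$, $\lambda_{n+1}=\lambda_n z_{n+1}\rho_n$, $\rho_{n+1}=\rho_n z_{n+1}\lambda_n$; write $\lambda_n(x,y,z_1,\ldots,z_n)$ and $\rho_n(x,y,z_1,\ldots,z_n)$. A semigroup $S$ is nilpotent (in the sense of Mal'cev) if there is a positive integer $n$ with $\lambda_n(a,b,c_1,\ldots,c_n)=\rho_n(a,b,c_1,\ldots,c_n)$ for all $a,b\in S$ and $c_1,\ldots,c_n\in S^1$. $\langle X\rangle$ denotes the subsemigroup generated by $X$. The upper non-nilpotent graph $\mathcal{N}_S$ has vertex set $S$, with an edge between $x$ and $y$ iff $\langle x,y\rangle$ is not nilpotent. The lower non-nilpotent graph $\mathcal{L}_S$ has vertex set $S$, with an edge between distinct $x,y\in S$ iff there exist $n\ge 1$ and $w_1,\ldots,w_n\in\langle x,y\rangle^1$ with $x=\lambda_n(x,y,w_1,\ldots,w_n)$ and $y=\rho_n(x,y,w_1,\ldots,w_n)$. The empty set is regarded as an ideal; for an ideal $I$ of $S$, $S/I$ is the Rees factor semigroup, with $S/\emptyset=S$. A semigroup $S$ is pseudo-nilpotent if the following holds: whenever $x,y\in S$, $w_1,\ldots,w_m\in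 S^1$, $T$ is the subsemigroup generated by $x,y$ and those $w_i$ lying in $S$, $I$ is an ideal (possibly empty) of $T$, and $t<m$ are non-negative integers such that, writing $\lambda_k=\lambda_k(x,y,w_1,\ldots,w_k)$ and $\rho_k=\rho_k(x,y,w_1,\ldots,w_k)$, one has $\lambda_t\neq\rho_t$, $(\lambda_t,\rho_t)=(\lambda_m,\rho_m)$ and $\lambda_m,\rho_m\notin I$, then for every $0\le i\le m$ there is an edge in $\mathcal{N}_{T/I}$ between (the images of) $\lambda_i$ and $\rho_i$. *)

From mathcomp Require Import all_boot.
From Stdlib Require List.
Set Implicit Arguments. Unset Strict Implicit. Unset Printing Implicit Defensive.

(* Generic semigroup notions over a carrier type A with multiplication mul.
   Elements of S^1 are encoded as option A, with None = adjoined identity. *)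
Section Generic.
Variables (A : Type) (mul : A -> A -> A).

Definition mul3 (a : A) (z : option A) (b : A) : A :=
  match z with None => mul a b | Some c => mul (mul a c) b end.

Definition lamrho (x y : A) (zs : seq (option A)) : A * A :=
  foldl (fun p z => (mul3 p.1 z p.2, mul3 p.2 z p.1)) (x, y) zs.

Definition in1 (U : A -> Prop) (z : option A) : Prop :=
  match z with None => True | Some c => U c end.

Inductive gen (X : A -> Prop) : A -> Prop :=
| gen_base a : X a -> gen X a
| gen_mul a b : gen X a -> gen X b -> gen X (mul a b).

(* Mal'cev nilpotency of the subsemigroup U *)
Definition nilpotent_sub (U : A -> Prop) : Prop :=
  exists n, 0 < n /\
    forall a b, U a -> U b -> forall cs : seq (option A),
      size cs = n -> List.Forall (in1 U) cs ->
      (lamrho a b cs).1 = (lamrho a b cs).2.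

Definition pair_set (x y : A) : A -> Prop := fun a => a = x \/ a = y.

Definition upper_edge (x y : A) : Prop := ~ nilpotent_sub (gen (pair_set x y)).

Definition lower_edge (x y : A) : Prop :=
  x <> y /\ exists ws : seq (option A),
    0 < size ws /\ List.Forall (in1 (gen (pair_set x y))) ws /\ lamrho x y ws = (x, y).

(* I (possibly empty) is an ideal of the subsemigroup T *)
Definition is_ideal_of (T : A -> Prop) (I : pred A) : Prop :=
  (forall a, I a -> T a) /\
  (forall a b, T a -> I b -> I (mul a b) /\ I (mul b a)).
End Generic.

(* Rees factor T/I, modelled on option A: Some a is the class of a in T \ I,
   None is the zero (only reachable when I is nonempty). *)
Definition rees (A : Type) (mul : A -> A -> A) (I : pred A)
  (a b : option A) : option A :=
  match a, b with
  | Some a, Some b => if I (mul a b) then None else Some (mul a b)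
  | _, _ => None
  end.

Definition rees_img (A : Type) (I : pred A) (a : A) : option A :=
  if I a then None else Some a.

Definition pseudo_nilpotent (A : Type) (mul : A -> A -> A) : Prop :=
  forall (x y : A) (ws : seq (option A)) (I : pred A) (t : nat),
    let T := gen mul (fun a => a = x \/ a = y \/ List.In (Some a) ws) in
    is_ideal_of mul T I ->
    t < size ws ->
    (lamrho mul x y (take t ws)).1 <> (lamrho mul x y (take t ws)).2 ->
    lamrho mul x y (take t ws) = lamrho mul x y ws ->
    ~~ I (lamrho mul x y ws).1 -> ~~ I (lamrho mul x y ws).2 ->
    forall i, i <= size ws ->
      upper_edge (rees mul I)
        (rees_img I (lamrho mul x y (take i ws)).1)
        (rees_img I (lamrho mul x y (take i ws)).2).

From mathcomp Require Import all_boot.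
From mathcomp Require Import zify.
From Stdlib Require Import Classical ClassicalEpsilon.
From Stdlib Require List.
Set Implicit Arguments. Unset Strict Implicit. Unset Printing Implicit Defensive.

(* If <x,y> is not nilpotent, a sufficiently long word with lambda_n <> rho_n
   must, by finiteness, revisit a pair (lambda_t, rho_t) = (lambda_m, rho_m)
   with t < m.  This pair (x', y') lies in <x,y> and is a cycle of the
   lambda/rho recursion, so pseudo-nilpotence (with t = 0 and I empty) makes
   <x',y'> non-nilpotent.  Were <x',y'> = <x,y>, the cycle would be an edge of
   the lower graph; hence <x',y'> is a proper subsemigroup of <x,y>, and
   induction on |<x,y>| rules out any edge of the upper graph. *)

Lemma Forall_take (T : Type) (P : T -> Prop) n s :
  List.Forall P s -> List.Forall P (take n s).
Proof.
elim: s n => [|z s IH] [|n] /= Hs; try by constructor.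
by inversion Hs; subst; constructor; auto.
Qed.

Lemma Forall_drop (T : Type) (P : T -> Prop) n s :
  List.Forall P s -> List.Forall P (drop n s).
Proof. elim: s n => [|z s IH] [|n] //= Hs; by inversion Hs; subst; auto. Qed.

Lemma ord_pigeonhole (T : finType) n (f : 'I_n -> T) :
  #|T| < n -> exists i j : 'I_n, i < j /\ f i = f j.
Proof.
move=> lt_T_n.
have /injectivePn [i [j neq_ij eq_fij]] : ~~ injectiveb f.
  by apply/injectiveP => /leq_card; rewrite card_ord; lia.
case: (ltngtP i j) => [lt_ij | lt_ji | /val_inj eq_ij].
- by exists i, j.
- by exists j, i.
- by rewrite eq_ij eqxx in neq_ij.
Qed.

Section LambdaRho.
Variables (A : Type) (mul : A -> A -> A).

Lemma gen_min (X V : A -> Prop) :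
  (forall a, X a -> V a) -> (forall a b, V a -> V b -> V (mul a b)) ->
  forall a, gen mul X a -> V a.
Proof. move=> XV Vmul a; elim=> [c /XV // | c d _ Vc _ Vd]; exact: Vmul. Qed.

Lemma in1_sub (U V : A -> Prop) z :
  (forall a, U a -> V a) -> in1 U z -> in1 V z.
Proof. by case: z => //= c UV /UV. Qed.

Lemma lamrho_cons x y z zs :
  lamrho mul x y (z :: zs) = lamrho mul (mul3 mul x z y) (mul3 mul y z x) zs.
Proof. by []. Qed.

Lemma lamrho_cat x y s1 s2 :
  lamrho mul x y (s1 ++ s2) =
  lamrho mul (lamrho mul x y s1).1 (lamrho mul x y s1).2 s2.
Proof. by rewrite /lamrho foldl_cat; case: (foldl _ _ s1). Qed.

Lemma lamrho_diag u zs : (lamrho mul u u zs).1 = (lamrho mul u u zs).2.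
Proof. by elim: zs u => [|z zs IH] u //=; rewrite lamrho_cons IH. Qed.

Lemma lamrho_gen (X : A -> Prop) a b zs :
  gen mul X a -> gen mul X b -> List.Forall (in1 (gen mul X)) zs ->
  gen mul X (lamrho mul a b zs).1 /\ gen mul X (lamrho mul a b zs).2.
Proof.
elim: zs a b => [|z zs IH] a b Xa Xb Xzs //=.
inversion Xzs as [|z' zs' Xz Xzs']; subst; rewrite lamrho_cons.
by apply: IH => //; case: z Xz {Xzs} => [c|] /= Xc; repeat apply: gen_mul.
Qed.

Lemma not_nilpotent_unbalanced (U : A -> Prop) n :
  ~ nilpotent_sub mul U -> 0 < n ->
  exists a b cs, [/\ U a, U b, size cs = n, List.Forall (in1 U) cs
                   & (lamrho mul a b cs).1 <> (lamrho mul a b cs).2].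
Proof.
move=> not_nil n_gt0; apply: NNPP => no_witness; apply: not_nil.
exists n; split=> // a b Ua Ub cs size_cs Ucs; apply: NNPP => neq.
by apply: no_witness; exists a, b, cs.
Qed.

Definition lamrho_cycle (U : A -> Prop) x y (ws : seq (option A)) : Prop :=
  [/\ x <> y, 0 < size ws, List.Forall (in1 U) ws & lamrho mul x y ws = (x, y)].

Lemma lamrho_cycle_lower_edge x y ws :
  lamrho_cycle (gen mul (pair_set x y)) x y ws -> lower_edge mul x y.
Proof. by case=> neq_xy ws_gt0 Uws cyc; split=> //; exists ws. Qed.

Lemma lamrho_cycle_sub (U V : A -> Prop) x y ws :
  (forall a, U a -> V a) -> lamrho_cycle U x y ws -> lamrho_cycle V x y ws.
Proof.
move=> UV [neq_xy ws_gt0 Uws cyc]; split=> //.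
by apply: List.Forall_impl Uws => z; apply: in1_sub.
Qed.

Lemma lamrho_repeat_cycle (X : A -> Prop) a b cs t m :
  let U := gen mul X in
  U a -> U b -> List.Forall (in1 U) cs ->
  (lamrho mul a b cs).1 <> (lamrho mul a b cs).2 ->
  t < m -> m <= size cs ->
  lamrho mul a b (take t cs) = lamrho mul a b (take m cs) ->
  exists x y ws, [/\ U x, U y & lamrho_cycle U x y ws].
Proof.
move=> U Ua Ub Ucs neq_end lt_tm le_m eq_tm.
set p := lamrho mul a b (take t cs).
have [Up1 Up2] := lamrho_gen Ua Ub (Forall_take t Ucs).
exists p.1, p.2, (drop t (take m cs)); split=> //; split.
- move=> eq_p; apply: neq_end.
  by rewrite -(cat_take_drop t cs) lamrho_cat -/p eq_p lamrho_diag.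
- by rewrite size_drop size_take; case: ifP; lia.
- exact: Forall_drop (Forall_take _ Ucs).
- have split_m : take m cs = take t cs ++ drop t (take m cs).
    by rewrite -{1}(cat_take_drop t (take m cs)) take_takel // ltnW.
  rewrite split_m lamrho_cat -/p in eq_tm.
  by rewrite -eq_tm; apply: surjective_pairing.
Qed.

End LambdaRho.

(* The Rees factor T/I with I empty is T with a new zero None adjoined, which is
   never reached by products of elements Some a. *)
Section ReesEmpty.
Variables (A : Type) (mul : A -> A -> A).
Let mul0 := rees mul xpred0.

Lemma gen_rees0 a b u :
  gen mul0 (pair_set (Some a) (Some b)) u ->
  exists2 v, u = Some v & gen mul (pair_set a b) v.
Proof.
elim=> [c [->|->] | c d _ [v1 -> gen_v1] _ [v2 -> gen_v2]].
- by exists a => //; apply: gen_base; left.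
- by exists b => //; apply: gen_base; right.
- by exists (mul v1 v2) => //; apply: gen_mul.
Qed.

Lemma Forall_in1_rees0 a b cs :
  List.Forall (in1 (gen mul0 (pair_set (Some a) (Some b)))) cs ->
  List.Forall (fun z => z <> Some None) cs /\
  List.Forall (in1 (gen mul (pair_set a b))) (map (obind id) cs).
Proof.
elim: cs => [|z cs IH] Ucs /=; first by split; constructor.
inversion Ucs as [|z' cs' Uz Ucs']; subst; have [IH1 IH2] := IH Ucs'.
split; constructor=> //.
- by case: z Uz {Ucs} => // [[c|]] //= /gen_rees0 [].
- by case: z Uz {Ucs} => [u|] //= /gen_rees0 [v ->].
Qed.

Lemma lamrho_rees0 a b cs :
  List.Forall (fun z => z <> Some None) cs ->
  lamrho mul0 (Some a) (Some b) cs =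
  (Some (lamrho mul a b (map (obind id) cs)).1,
   Some (lamrho mul a b (map (obind id) cs)).2).
Proof.
elim: cs a b => [|z cs IH] a b nonzero //=.
inversion nonzero as [|z' cs' nz nonzero']; subst; rewrite lamrho_cons.
by case: z nz nonzero => [[c|]|] //= _ _; apply: IH.
Qed.

Lemma upper_edge_rees0 a b :
  upper_edge mul0 (Some a) (Some b) -> upper_edge mul a b.
Proof.
move=> edge [n [n_gt0 nil]]; apply: edge; exists n; split=> // u v Uu Uv cs size_cs Ucs.
have [a1 -> gen_a1] := gen_rees0 Uu; have [b1 -> gen_b1] := gen_rees0 Uv.
have [nonzero Ucs'] := Forall_in1_rees0 Ucs.
by rewrite lamrho_rees0 //= (nil a1 b1) // size_map.
Qed.

Lemma pseudo_nilpotent_cycle_upper_edge (U : A -> Prop) x y ws :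
  pseudo_nilpotent mul -> lamrho_cycle mul U x y ws -> upper_edge mul x y.
Proof.
move=> pnil [neq_xy ws_gt0 _ cyc]; apply: upper_edge_rees0.
have ideal0 : is_ideal_of mul
    (gen mul (fun a => a = x \/ a = y \/ List.In (Some a) ws)) xpred0 by [].
have := pnil x y ws xpred0 0 ideal0 ws_gt0; rewrite take0 cyc.
by move=> /(_ neq_xy erefl isT isT 0 (leq0n _)); rewrite take0.
Qed.

End ReesEmpty.

Section FiniteSemigroup.
Variables (S : finType) (mul : S -> S -> S).

Lemma upper_edge_cycle x y :
  upper_edge mul x y ->
  let U := gen mul (pair_set x y) in
  exists x' y' ws, [/\ U x', U y' & lamrho_cycle mul U x' y' ws].
Proof.
move=> edge U; set N := #|{: S * S}|.
have [a [b [cs [Ua Ub size_cs Ucs neq_end]]]] :=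
  not_nilpotent_unbalanced (n := N.+1) edge (ltn0Sn N).
pose prefix (i : 'I_N.+2) := lamrho mul a b (take i cs).
have [t [m [lt_tm eq_tm]]] := ord_pigeonhole prefix (ltnW (ltnSn N.+1)).
apply: (lamrho_repeat_cycle Ua Ub Ucs neq_end lt_tm _ eq_tm).
by rewrite size_cs -ltnS.
Qed.

Definition gen_set x y : {set S} :=
  [set z | if excluded_middle_informative (gen mul (pair_set x y) z)
           then true else false].

Lemma gen_setP x y z : reflect (gen mul (pair_set x y) z) (z \in gen_set x y).
Proof. by rewrite inE; case: excluded_middle_informative => ?; constructor. Qed.

Lemma gen_set_pair_sub x y x' y' :
  gen mul (pair_set x y) x' -> gen mul (pair_set x y) y' ->
  gen_set x' y' \subset gen_set x y.
Proof.
move=> Ux' Uy'; apply/subsetP => z /gen_setP gen_z; apply/gen_setP.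
by apply: gen_min gen_z => [c [->|->] // | ]; apply: gen_mul.
Qed.

Lemma upper_edge_descent x y :
  pseudo_nilpotent mul -> (forall x y : S, ~ lower_edge mul x y) ->
  upper_edge mul x y ->
  exists x' y', upper_edge mul x' y' /\ gen_set x' y' \proper gen_set x y.
Proof.
move=> pnil no_lower /upper_edge_cycle [x' [y' [ws [Ux' Uy' cyc]]]].
exists x', y'; split; first exact: pseudo_nilpotent_cycle_upper_edge pnil cyc.
rewrite properE gen_set_pair_sub //=; apply/negP => sub.
apply: (no_lower x' y'); apply: lamrho_cycle_lower_edge.
by apply: lamrho_cycle_sub cyc => z /gen_setP/(subsetP sub)/gen_setP.
Qed.

End FiniteSemigroup.

Theorem proposition2p6 (S : finType) (mul : S -> S -> S) :
  associative mul ->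
  pseudo_nilpotent mul ->
  (forall x y : S, ~ lower_edge mul x y) ->
  forall x y : S, ~ upper_edge mul x y.
Proof.
move=> _ pnil no_lower x y; have [k] := ubnP #|gen_set mul x y|.
elim: k x y => // k IH x y lt_k edge.
have [x' [y' [edge' proper']]] := upper_edge_descent pnil no_lower edge.
by apply: (IH x' y') edge'; apply: leq_trans (proper_card proper') _.
Qed.
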